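(* Let $a,a^{+}$ be boson operators with $aa^{+}-a^{+}a=1$, let $m\in\mathbb{N}$, $r\ge0$, and let $\lambda$ be a nonzero real number. For all integers $l,n\ge0$, \[ (m\,a^{+}a+r)_{l+n,\lambda}=\sum_{j=0}^{l}\sum_{k=0}^{n}W^{(r)}_{m,\lambda}(l,j)\binom{n}{k}m^{j}(a^{+})^{j}(mj-l\lambda)_{n-k,\lambda}\,(m\,a^{+}a+r)_{k,\lambda}\,a^{j}. \]
   Context: For an operator or number $X$ and real $\lambda\neq0$, $(X)_{0,\lambda}=1$ and $(X)_{n,\lambda}=X(X-\lambda)\cdots(X-(n-1)\lambda)$ for $n\ge1$ (scalars mean multiples of the identity); $(x)_k=x(x-1)\cdots(x-k+1)$. For $m\in\mathbb{N}$ and $r\ge0$, the degenerate $r$-Whitney numbers of the second kind $W^{(r)}_{m,\lambda}(n,k)$ are defined by $(mx+r)_{n,\lambda}=\sum_{k=0}^{n}W^{(r)}_{m,\lambda}(n,k)m^{k}(x)_k$ ($n\ge0$). *)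

From mathcomp Require Import all_boot all_order all_algebra.
From mathcomp Require Import reals.
Set Implicit Arguments. Unset Strict Implicit. Unset Printing Implicit Defensive.
Import Order.TTheory GRing.Theory Num.Theory.
Local Open Scope ring_scope.

Definition dfall (T : pzRingType) (X lam : T) (n : nat) : T :=
  \prod_(i < n) (X - i%:R * lam).

(* Write N = a^+ a.  The commutation relation gives a^j N = (N + j) a^j, hence
   (a^+)^j a^j = (N)_{j,1}, and a^j passes to the right of any degenerate
   falling factorial in m N + c at the cost of shifting c by m j.  Split
   (m N + r)_{l+n,lam} = (m N + r)_{l,lam} (m N + r - l lam)_{n,lam}; expand
   the first factor in the (N)_{j,1} = (a^+)^j a^j by the defining identity of
   the Whitney numbers (a polynomial identity in one real variable, hence
   valid for N), move a^j to the right, and expand the shifted factor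
   (m N + r + (m j - l lam))_{n,lam} by the degenerate Vandermonde identity. *)
From mathcomp Require Import all_boot all_order all_algebra.
From mathcomp Require Import reals.
From mathcomp Require Import ring.
Set Implicit Arguments.
Unset Strict Implicit.
Import Order.TTheory GRing.Theory Num.Theory.
Local Open Scope ring_scope.

Lemma dfall0 (T : pzRingType) (X lam : T) : dfall X lam 0 = 1.
Proof. by rewrite /dfall big_ord0. Qed.

Lemma dfallS (T : pzRingType) (X lam : T) n :
  dfall X lam n.+1 = dfall X lam n * (X - n%:R * lam).
Proof. by rewrite /dfall big_ord_recr. Qed.

Lemma dfallD (T : pzRingType) (X lam : T) l n :
  dfall X lam (l + n) = dfall X lam l * dfall (X - l%:R * lam) lam n.
Proof.
rewrite /dfall big_split_ord /=; congr (_ * _); apply: eq_bigr => i _.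
by rewrite natrD mulrDl opprD addrA.
Qed.

Lemma rmorph_dfall (S T : pzRingType) (f : {rmorphism S -> T}) (X lam : S) n :
  f (dfall X lam n) = dfall (f X) (f lam) n.
Proof.
rewrite /dfall rmorph_prod; apply: eq_bigr => i _.
by rewrite rmorphB rmorphM rmorph_nat.
Qed.

Lemma dfall_intertwine (T : pzRingType) (u X Y lam : T) n :
  u * X = Y * u -> GRing.comm u lam -> u * dfall X lam n = dfall Y lam n * u.
Proof.
move=> uXY ulam; elim: n => [|n IHn]; first by rewrite !dfall0 mulr1 mul1r.
rewrite !dfallS mulrA IHn -!mulrA; congr (_ * _).
by rewrite mulrBr mulrBl uXY mulrA (commr_nat u) -!mulrA ulam.
Qed.

Lemma dfall_binom (T : comPzRingType) (x y lam : T) n :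
  dfall (x + y) lam n =
  \sum_(k < n.+1) 'C(n, k)%:R * dfall y lam (n - k) * dfall x lam k.
Proof.
elim: n => [|n IHn].
  by rewrite big_ord_recl big_ord0 !dfall0 addr0 !mulr1.
have pascal (k : 'I_n.+1) :
    'C(n, k)%:R * dfall y lam (n - k) * dfall x lam k * (x + y - n%:R * lam)
    = 'C(n, k)%:R * dfall y lam (n - k) * dfall x lam k.+1
    + 'C(n, k)%:R * dfall y lam (n - k).+1 * dfall x lam k.
  rewrite !dfallS.
  have -> : n%:R = (n - k)%:R + k%:R :> T by rewrite -natrD subnK // -ltnS.
  ring.
rewrite dfallS IHn big_distrl /= (eq_bigr _ (fun k _ => pascal k)) big_split /=.
rewrite [in RHS]big_ord_recl /= bin0 subn0 mul1r dfall0 mulr1.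
under [in RHS]eq_bigr => k _ do rewrite /bump /= add1n binS natrD !mulrDl subSS.
rewrite big_split /= [RHS]addrA [RHS]addrC; congr (_ + _).
rewrite big_ord_recl [in RHS]big_ord_recr /= bin0 subn0 mul1r dfall0 mulr1.
rewrite bin_small // !mul0r addr0; congr (_ + _); apply: eq_bigr => k _.
by rewrite /bump /= add1n -subSn.
Qed.

Lemma dfall_binom_alg (R : comNzRingType) (A : algType R) (X : A) (y lam : R) n :
  dfall (X + y%:A) lam%:A n =
  \sum_(k < n.+1) 'C(n, k)%:R * (dfall y lam (n - k))%:A * dfall X lam%:A k.
Proof.
have := congr1 (horner_alg X) (dfall_binom 'X y%:P lam%:P n).
rewrite rmorph_dfall rmorphD /= horner_algX !horner_algC => ->.
rewrite rmorph_sum; apply: eq_bigr => k _.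
by rewrite !rmorphM /= rmorph_nat !rmorph_dfall /= horner_algX !horner_algC
  -(rmorph_dfall (in_alg A)).
Qed.

Lemma poly_horner_inj (R : numDomainType) (p q : {poly R}) :
  (forall x, p.[x] = q.[x]) -> p = q.
Proof.
move=> pq; apply/eqP; rewrite -subr_eq0; apply/eqP.
apply: (@roots_geq_poly_eq0 _ _ [seq i%:R | i <- iota 0 (size (p - q))]).
- by apply/allP => x _; rewrite /root hornerD hornerN pq subrr.
- by rewrite map_inj_uniq ?iota_uniq // => i j /eqP; rewrite eqr_nat => /eqP.
- by rewrite size_map size_iota.
Qed.

Lemma dfall_expand_alg (R : numDomainType) (A : algType R) (m : nat)
    (r lam : R) (W : nat -> nat -> R)
    (HW : forall (n : nat) (x : R),
       dfall (m%:R * x + r) lam n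
       = \sum_(k < n.+1) W n k * m%:R ^+ k * dfall x 1 k)
    (X : A) (l : nat) :
  dfall (m%:R * X + r%:A) lam%:A l
  = \sum_(k < l.+1) (W l k * m%:R ^+ k)%:A * dfall X 1 k.
Proof.
pose P : {poly R} := dfall (m%:R * 'X + r%:P) lam%:P l.
pose Q : {poly R} := \sum_(k < l.+1) (W l k * m%:R ^+ k)%:P * dfall 'X 1 k.
have PQ : P = Q.
  apply: poly_horner_inj => x.
  rewrite -!horner_evalE rmorph_dfall rmorph_sum /= !horner_evalE.
  rewrite !hornerE hornerMn hornerC HW; apply: eq_bigr => k _.
  by rewrite rmorphM /= rmorph_dfall /= !horner_evalE !hornerE.
have := congr1 (horner_alg X) PQ.
rewrite rmorph_dfall rmorph_sum /= rmorphD rmorphM /= rmorph_nat.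
rewrite !horner_algC horner_algX => ->.
apply: eq_bigr => k _; rewrite rmorphM /= horner_algC rmorph_dfall /=.
by rewrite horner_algX rmorph1.
Qed.

Section Boson.

Variables (T : pzRingType) (a ad : T).
Hypothesis boson : a * ad - ad * a = 1.

Lemma exp_mul_number j : a ^+ j * (ad * a) = (ad * a + j%:R) * a ^+ j.
Proof.
have a_number : a * (ad * a) = (ad * a + 1) * a.
  by rewrite mulrA -[a * ad](subrK (ad * a)) boson addrC.
elim: j => [|j IHj]; first by rewrite expr0 mulr1 mul1r addr0.
rewrite exprS -mulrA IHj mulrA mulrDr a_number (commr_nat a) -mulrDl -mulrA.
by rewrite -addrA (addrC 1) natr1.
Qed.

Lemma number_mul_exp j : (ad * a) * a ^+ j = a ^+ j * (ad * a - j%:R).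
Proof. by rewrite mulrBr exp_mul_number mulrDl (commr_nat (a ^+ j)) addrK. Qed.

Lemma normal_order j : ad ^+ j * a ^+ j = dfall (ad * a) 1 j.
Proof.
elim: j => [|j IHj]; first by rewrite !expr0 mulr1 dfall0.
rewrite dfallS exprSr exprS -mulrA (mulrA ad) number_mul_exp.
by rewrite mulrA IHj mulr1.
Qed.

End Boson.

Lemma exp_mul_dfall_number (R : pzRingType) (A : algType R) (a ad : A)
    (boson : a * ad - ad * a = 1) (m : nat) (c lam : R) j n :
  a ^+ j * dfall (m%:R * (ad * a) + c%:A) lam%:A n
  = dfall (m%:R * (ad * a) + (c + m%:R * j%:R)%:A) lam%:A n * a ^+ j.
Proof.
apply: dfall_intertwine; last exact/esym/comm_alg.
rewrite mulrDr [a ^+ j * (_ * _)]mulrA (commr_nat (a ^+ j)) -mulrA.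
rewrite exp_mul_number // [m%:R * (_ * a ^+ j)]mulrA -(comm_alg c) -mulrDl.
congr (_ * _); rewrite scalerDl mulrDr -addrA [c%:A + _]addrC.
by rewrite -[(_ * _)%:A]in_algE rmorphM !rmorph_nat.
Qed.

Theorem mainTheorem8 (R : realType) (A : algType R) (a ad : A)
  (m : nat) (r lam : R) (W : nat -> nat -> R)
  (Hboson : a * ad - ad * a = 1)
  (Hr : 0 <= r) (Hlam : lam != 0)
  (HW : forall (n : nat) (x : R),
     dfall (m%:R * x + r) lam n
     = \sum_(k < n.+1) W n k * m%:R ^+ k * dfall x 1 k)
  (l n : nat) :
  dfall (m%:R * (ad * a) + r%:A) lam%:A (l + n)
  = \sum_(j < l.+1) \sum_(k < n.+1)
      (W l j)%:A * ('C(n, k))%:R * (m ^ j)%:R * ad ^+ j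
      * (dfall (m%:R * j%:R - l%:R * lam) lam (n - k))%:A
      * dfall (m%:R * (ad * a) + r%:A) lam%:A k * a ^+ j.
Proof.
rewrite dfallD (dfall_expand_alg HW) big_distrl /=; apply: eq_bigr => j _.
set X := m%:R * (ad * a) + r%:A.
set y := m%:R * j%:R - l%:R * lam.
have shift : a ^+ j * dfall (X - l%:R * lam%:A) lam%:A n
           = dfall (X + y%:A) lam%:A n * a ^+ j.
  rewrite /X -addrA [l%:R * _]mulr_natl scalerMnl -scalerBl.
  rewrite exp_mul_dfall_number // -[in RHS]addrA -scalerDl /y.
  by congr (dfall (_ + _ *: _) _ _ * _); ring.
rewrite -(normal_order Hboson) -!mulrA shift dfall_binom_alg.
rewrite big_distrl !big_distrr /=; apply: eq_bigr => k _.
rewrite -!(rmorph_nat (in_alg A)) natrX /= !mulr_algl.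
do ![rewrite -scalerAl | rewrite -scalerAr | rewrite scalerA | rewrite mul1r
    | rewrite mulr1].
rewrite !mulrA; congr (_ *: _).
by rewrite -!mulrA; congr (_ * _); rewrite mulrC -mulrA.
Qed.
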